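(* Let $(H_n)_{n\ge1}$ be symmetric positive-definite random $d\times d$ matrices with $\|H_n\|_2\le1$ a.s., $\gamma_n=Cn^{-\alpha}$ with $C>0$, $\alpha\in(\frac12,1)$, and $X_0\in\mathbb R^{d\times k}$ with $X_0^\top X_0=I_k$. Let either $X_n=R_{X_{n-1}}\big(\gamma_n(I-X_{n-1}X_{n-1}^\top)H_nX_{n-1}\big)$ for all $n$ (Riemannian SGD), or $X_n=R_{X_{n-1}}(\gamma_nH_nX_{n-1})$ for all $n$ (randomized power method). In both cases there is a constant $c>0$ such that almost surely, for all $n\ge1$, $$\big\|X_n-X_{n-1}-\gamma_n(I-X_{n-1}X_{n-1}^\top)H_nX_{n-1}\big\|_F\le c\,\gamma_n^2,$$ i.e. both updates coincide with the Oja update $X_{n-1}+\gamma_n(I-X_{n-1}X_{n-1}^\top)H_nX_{n-1}$ up to $O(\gamma_n^2)$.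
   Context: $R_X(V)=(X+V)[(X+V)^\top(X+V)]^{-1/2}$ for $X\in\mathbb R^{d\times k}$ with $X^\top X=I_k$ and $V\in\mathbb R^{d\times k}$ (the projection-like retraction on the Grassmann manifold of $k$-dimensional subspaces of $\mathbb R^d$, represented by orthonormal $d\times k$ matrices). *)

From HB Require Import structures.
From mathcomp Require Import all_boot all_order all_algebra.
From mathcomp Require Import all_classical all_reals all_analysis.
Set Implicit Arguments. Unset Strict Implicit. Unset Printing Implicit Defensive.
Import Order.TTheory GRing.Theory Num.Theory.
Local Open Scope ring_scope.
Local Open Scope classical_set_scope.

Section Defs.
Variable R : realType.

Definition sqnormv (n : nat) (v : 'cV[R]_n) : R := \sum_i (v i 0) ^+ 2.

Definition frob (m n : nat) (A : 'M[R]_(m, n)) : R :=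
  Num.sqrt (\sum_i \sum_j (A i j) ^+ 2).

Definition opnorm_le1 (n : nat) (A : 'M[R]_n) : Prop :=
  forall v : 'cV[R]_n, sqnormv (A *m v) <= sqnormv v.

Definition symmetric (n : nat) (A : 'M[R]_n) : Prop := A^T = A.

Definition posdef (n : nat) (A : 'M[R]_n) : Prop :=
  symmetric A /\ forall v : 'cV[R]_n, v != 0 -> 0 < (v^T *m A *m v) 0 0.

(* A^{-1/2}: the symmetric positive-definite S with S S A = I
   (it exists and is unique whenever A is positive definite). *)
Definition invsqrtmx (n : nat) (A : 'M[R]_n) : 'M[R]_n :=
  xget 0 [set S : 'M[R]_n | posdef S /\ S *m S *m A = 1%:M].

Definition retr (d k : nat) (X V : 'M[R]_(d, k)) : 'M[R]_(d, k) :=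
  (X + V) *m invsqrtmx ((X + V)^T *m (X + V)).

Definition ojadir (d k : nat) (X : 'M[R]_(d, k)) (H : 'M[R]_d) : 'M[R]_(d, k) :=
  (1%:M - X *m X^T) *m H *m X.

End Defs.

(* Both updates are retractions R_X(g W) of a direction W whose tangential
   part B = X^T W is symmetric positive semidefinite: B = 0 for the Riemannian
   gradient W = (I - X X^T) H X, and B = X^T H X for the power step W = H X.
   With M = X + g W the Gram matrix is M^T M = I + D, where
   D = g (B + B^T) + g^2 W^T W is positive semidefinite, so S = (M^T M)^(-1/2)
   satisfies |S S| <= 1 and 2 (S - I) + D = - (S - I)^2 + S^2 D^2.  Hence
   S - I = O(g), S - I + g B = O(g^2), and
     R_X(g W) - X - g (W - X B) = M (S - I + g B) - g^2 W B = O(g^2),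
   where W - X B = (I - X X^T) H X in both cases.  The inverse square root
   exists because the square of a polynomial in M^T M interpolating
   t |-> t^(-1/4) on its spectrum is one. *)

From Pilot Require Import Defs.
From HB Require Import structures.
From mathcomp Require Import all_boot all_order all_algebra.
From mathcomp Require Import all_classical all_reals all_analysis.
From mathcomp Require complex.
Import (canonicals) complex.
From mathcomp Require Import ring lra.
Import Order.TTheory GRing.Theory Num.Theory.
Local Open Scope ring_scope.
Set Implicit Arguments. Unset Strict Implicit. Unset Printing Implicit Defensive.

Ltac nonneg := repeat first
  [ assumption | apply: addr_ge0 | apply: mulr_ge0 | apply: exprn_ge0
  | apply: ler0n | apply: ler01 ].

Section QuadraticForms.
Variable R : realFieldType.

Definition psdmx n (A : 'M[R]_n) := forall u : 'cV[R]_n, 0 <= (u^T *m A *m u) 0 0.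

Lemma dotmx_selfE m (w : 'cV[R]_m) : (w^T *m w) 0 0 = \sum_i w i 0 ^+ 2.
Proof. by rewrite mxE; apply: eq_bigr => i _; rewrite mxE expr2. Qed.

Lemma dotmx_self_ge0 m (w : 'cV[R]_m) : 0 <= (w^T *m w) 0 0.
Proof. by rewrite dotmx_selfE; apply: sumr_ge0 => i _; apply: sqr_ge0. Qed.

Lemma dotmx_self_gt0 m (w : 'cV[R]_m) : w != 0 -> 0 < (w^T *m w) 0 0.
Proof.
move=> w_neq0; have [i wi_neq0] : exists i, w i 0 != 0.
  apply/existsP; apply: contraNT w_neq0; rewrite negb_exists => /forallP w0.
  by apply/eqP/matrixP => i j; rewrite ord1 mxE; apply/eqP/negPn.
rewrite dotmx_selfE (bigD1 i) //= ltr_pwDl ?sqr_ge0 //; last first.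
  by apply: sumr_ge0 => j _; apply: sqr_ge0.
by rewrite lt_def sqr_ge0 sqrf_eq0 wi_neq0.
Qed.

Lemma dotmx_selfD m (x y : 'cV[R]_m) :
  ((x + y)^T *m (x + y)) 0 0 =
  (x^T *m x) 0 0 + 2 * (x^T *m y) 0 0 + (y^T *m y) 0 0.
Proof.
rewrite !dotmx_selfE mxE mulr_sumr -!big_split /=.
by apply: eq_bigr => i _; rewrite !mxE; ring.
Qed.

Lemma psd_mulTmx m n (G : 'M[R]_(m, n)) : psdmx (G^T *m G).
Proof. by move=> u; rewrite mulmxA -trmx_mul -mulmxA dotmx_self_ge0. Qed.

Lemma psdmxZ n (a : R) (A : 'M[R]_n) : 0 <= a -> psdmx A -> psdmx (a *: A).
Proof. by move=> a0 A_psd u; rewrite -scalemxAr -scalemxAl mxE mulr_ge0. Qed.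

Lemma psdmxD n (A B : 'M[R]_n) : psdmx A -> psdmx B -> psdmx (A + B).
Proof. by move=> A_psd B_psd u; rewrite mulmxDr mulmxDl mxE addr_ge0. Qed.

End QuadraticForms.

Section EntrywiseBounds.
Variable R : realFieldType.

Definition mxbound m n (A : 'M[R]_(m, n)) (a : R) := forall i j, `|A i j| <= a.

Definition sqfrob m n (A : 'M[R]_(m, n)) : R := \sum_i \sum_j A i j ^+ 2.

Lemma mxbound_le m n (A : 'M[R]_(m, n)) a b : a <= b -> mxbound A a -> mxbound A b.
Proof. by move=> ab Aa i j; apply: le_trans (Aa i j) ab. Qed.

Lemma mxboundD m n (A B : 'M[R]_(m, n)) a b :
  mxbound A a -> mxbound B b -> mxbound (A + B) (a + b).
Proof. by move=> Aa Bb i j; rewrite mxE (le_trans (ler_normD _ _)) ?lerD. Qed.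

Lemma mxboundN m n (A : 'M[R]_(m, n)) a : mxbound A a -> mxbound (- A) a.
Proof. by move=> Aa i j; rewrite mxE normrN. Qed.

Lemma mxboundB m n (A B : 'M[R]_(m, n)) a b :
  mxbound A a -> mxbound B b -> mxbound (A - B) (a + b).
Proof. by move=> Aa /mxboundN; apply: mxboundD. Qed.

Lemma mxboundZ m n (A : 'M[R]_(m, n)) c a : mxbound A a -> mxbound (c *: A) (`|c| * a).
Proof. by move=> Aa i j; rewrite mxE normrM ler_wpM2l. Qed.

Lemma mxboundT m n (A : 'M[R]_(m, n)) a : mxbound A a -> mxbound A^T a.
Proof. by move=> Aa i j; rewrite mxE. Qed.

Lemma mxboundM m n p (A : 'M[R]_(m, n)) (B : 'M[R]_(n, p)) a b :
  mxbound A a -> mxbound B b -> mxbound (A *m B) (n%:R * (a * b)).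
Proof.
move=> Aa Bb i j; rewrite mxE; apply: le_trans (ler_norm_sum _ _ _) _.
apply: le_trans (_ : \sum_(l < n) a * b <= _); last by rewrite sumr_const card_ord mulr_natl.
by apply: ler_sum => l _; rewrite normrM ler_pM.
Qed.

Lemma mxbound1 n : mxbound (1%:M : 'M[R]_n) 1.
Proof. by move=> i j; rewrite mxE; case: (i == j); rewrite ?normr1 ?normr0. Qed.

Lemma mxbound_double m n (A : 'M[R]_(m, n)) a : mxbound (A + A) a -> mxbound A a.
Proof.
move=> AAa i j; apply: le_trans (AAa i j); rewrite mxE -mulr2n normrMn.
by rewrite mulr2n lerDl.
Qed.

Lemma sqr_le_sqfrob m n (A : 'M[R]_(m, n)) i j : A i j ^+ 2 <= sqfrob A.
Proof.
rewrite /sqfrob (bigD1 i) //= (bigD1 j) //= -addrA lerDl.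
apply: addr_ge0; apply: sumr_ge0 => l _; first exact: sqr_ge0.
by apply: sumr_ge0 => l' _; apply: sqr_ge0.
Qed.

Lemma sqfrob_mxbound m n (A : 'M[R]_(m, n)) a :
  mxbound A a -> sqfrob A <= (m * n)%:R * a ^+ 2.
Proof.
move=> Aa; apply: le_trans (_ : \sum_(i < m) \sum_(j < n) a ^+ 2 <= _).
  apply: ler_sum => i _; apply: ler_sum => j _.
  have a0 : 0 <= a := le_trans (normr_ge0 _) (Aa i j).
  by rewrite -real_normK ?num_real // ler_sqr ?nnegrE ?normr_ge0.
by rewrite !sumr_const !card_ord -mulrnA mulr_natl mulnC.
Qed.

Lemma mxbound_sqfrob m n (A : 'M[R]_(m, n)) b :
  0 <= b -> sqfrob A <= b ^+ 2 -> mxbound A b.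
Proof.
move=> b0 Ab i j; rewrite -ler_sqr ?nnegrE ?normr_ge0 // real_normK ?num_real //.
exact: le_trans (sqr_le_sqfrob A i j) Ab.
Qed.

Lemma sqfrobN m n (A : 'M[R]_(m, n)) : sqfrob (- A) = sqfrob A.
Proof. by apply: eq_bigr => i _; apply: eq_bigr => j _; rewrite mxE sqrrN. Qed.

Lemma sqfrob_le_mulr_psd n (E S : 'M[R]_n) : psdmx S -> sqfrob E <= sqfrob (E *m S + E).
Proof.
move=> S_psd; rewrite /sqfrob -subr_ge0 -sumrB; apply: sumr_ge0 => i _.
set r := row i E.
have rowES j : (E *m S) i j = (r *m S) 0 j by rewrite /r -row_mul [RHS]mxE.
have -> : \sum_j (E *m S + E) i j ^+ 2 - \sum_j E i j ^+ 2 =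
   \sum_j (r *m S) 0 j ^+ 2 + 2 * ((r *m S) *m r^T) 0 0.
  rewrite -sumrB mxE mulr_sumr -big_split /=; apply: eq_bigr => j _.
  by rewrite mxE rowES !mxE; ring.
apply: addr_ge0; first by apply: sumr_ge0 => j _; apply: sqr_ge0.
by apply: mulr_ge0 => //; have := S_psd r^T; rewrite trmxK.
Qed.

Lemma mxbound_orthonormal m n (X : 'M[R]_(m, n)) : X^T *m X = 1%:M -> mxbound X 1.
Proof.
move=> XtX i j; have /matrixP /(_ j j) := XtX; rewrite !mxE eqxx mulr1n => sum1.
rewrite -ler_sqr ?nnegrE ?normr_ge0 // real_normK ?num_real // expr1n -sum1.
rewrite (bigD1 i) //= mxE -expr2 lerDl.
by apply: sumr_ge0 => l _; rewrite mxE -expr2 sqr_ge0.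
Qed.

Lemma sqr_le_dotmx_self m (w : 'cV[R]_m) i : w i 0 ^+ 2 <= (w^T *m w) 0 0.
Proof.
rewrite dotmx_selfE (bigD1 i) //= lerDl.
by apply: sumr_ge0 => l _; apply: sqr_ge0.
Qed.

Lemma mxbound_contraction n (M : 'M[R]_n) :
  (forall v : 'cV_n, ((M *m v)^T *m (M *m v)) 0 0 <= (v^T *m v) 0 0) -> mxbound M 1.
Proof.
move=> M_contr i j; rewrite -ler_sqr ?nnegrE ?normr_ge0 // real_normK ?num_real //.
have := M_contr (delta_mx j 0).
rewrite trmx_delta mul_delta_mx -colE [delta_mx _ _ _ _]mxE /= expr1n.
by apply: le_trans; have := sqr_le_dotmx_self (col j M) i; rewrite [col _ _ _ _]mxE.
Qed.

End EntrywiseBounds.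

Lemma poly_interpolation (F : fieldType) (s : seq F) (f : F -> F) :
  exists p : {poly F}, {in s, forall r, p.[r] = f r}.
Proof.
elim: s => [|a s [p p_s]]; first by exists 0.
have [a_s | a_notin_s] := boolP (a \in s).
  by exists p => r; rewrite inE => /predU1P [-> |]; apply: p_s.
pose q := \prod_(r <- s) ('X - r%:P).
have q_s r : r \in s -> q.[r] = 0.
  move=> r_s; apply/eqP; rewrite horner_prod prodf_seq_eq0.
  by apply/hasP; exists r; rewrite //= hornerXsubC subrr.
have qa_neq0 : q.[a] != 0.
  rewrite horner_prod prodf_seq_eq0; apply/hasPn => r r_s /=.
  by rewrite hornerXsubC subr_eq0; apply: contraNneq a_notin_s => ->.
exists (p + ((f a - p.[a]) / q.[a]) *: q) => r; rewrite hornerD hornerZ.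
case/predU1P => [-> | r_s]; first by rewrite divfK // addrC subrK.
by rewrite (q_s r r_s) mulr0 addr0 p_s.
Qed.

Lemma trmx_horner_mx (R : comNzRingType) n (A : 'M[R]_n.+1) (p : {poly R}) :
  (horner_mx A p)^T = horner_mx A^T p.
Proof.
elim/poly_ind: p => [|p c IHp]; first by rewrite !rmorph0 trmx0.
rewrite !rmorphD !rmorphM /= !horner_mx_X !horner_mx_C -!mulmxE.
by rewrite linearD /= trmx_mul IHp tr_scalar_mx (comm_mx_horner _ (erefl _)).
Qed.

Section SymmetricSpectrum.
Variable R : rcfType.
Local Notation toC := (complex.real_complex R).

Lemma symmx_split_annihilator n (A : 'M[R]_n.+1) : A^T = A ->
  exists s : seq R, [/\ uniq s, all (eigenvalue A) s &
     horner_mx A (\prod_(r <- s) ('X - r%:P)) = 0].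
Proof.
move=> A_sym; pose AC := map_mx toC A.
have AC_herm : AC \is hermsymmx.
  apply: realsym_hermsym.
    apply/eqP; rewrite expr0 scale1r; apply/matrixP => i j; rewrite !mxE.
    by rewrite -[in LHS]A_sym mxE.
  by apply/mxOverP => i j; rewrite mxE; apply/complex.complex_realP; exists (A i j).
(* Over C, A is unitarily diagonalisable with real eigenvalues. *)
have /orthomx_spectralP AC_diag := hermitian_normalmx AC_herm.
set P := spectralmx AC in AC_diag; set lam := spectral_diag AC in AC_diag.
have P_unit : P \in unitmx by exact: spectral_unit.
have lam_real j : lam 0 j = toC (complex.Re (lam 0 j)).
  by have /complex.complex_realP [r ->] := mxOverP (hermitian_spectral_diag_real AC_herm) 0 j.
pose s := undup [seq complex.Re (lam 0 j) | j <- enum 'I_n.+1].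
exists s; split.
- exact: undup_uniq.
- apply/allP => x; rewrite mem_undup => /mapP [j _ ->].
  have : eigenvalue AC (lam 0 j).
    have PA : P *m AC = diag_mx lam *m P by rewrite AC_diag !mulmxA mulmxV // mul1mx.
    apply/eigenvalueP; exists (row j P).
      by rewrite -row_mul PA mul_diag_mx; apply/rowP => l; rewrite !mxE.
    apply/eqP => /(congr1 (mulmx^~ (invmx P))).
    rewrite -row_mul mulmxV // mul0mx => /rowP /(_ j).
    by rewrite !mxE eqxx /= => /eqP; rewrite oner_eq0.
  rewrite eigenvalue_root_char /AC -map_char_poly lam_real /root horner_map.
  by rewrite fmorph_eq0 -/(root _ _) -eigenvalue_root_char.
- apply: (@map_mx_inj _ _ toC); rewrite map_mx0 map_horner_mx rmorph_prod /=.
  under eq_bigr do rewrite map_polyXsubC.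
  rewrite -/AC AC_diag horner_mx_uconjC // horner_mx_diag.
  suff -> : map_mx (horner (\prod_(r <- s) ('X - (toC r)%:P))) lam = 0.
    by rewrite linear0 mulmx0 mul0mx.
  apply/rowP => j; rewrite !mxE horner_prod; apply/eqP; rewrite prodf_seq_eq0.
  apply/hasP; exists (complex.Re (lam 0 j)); last by rewrite /= hornerXsubC -lam_real subrr.
  by rewrite mem_undup; apply/mapP; exists j; rewrite ?mem_enum.
Qed.

End SymmetricSpectrum.

Section InverseSquareRoot.
Variable R : realType.

Lemma posdef_psd n (A : 'M[R]_n) : posdef A -> psdmx A.
Proof.
case=> _ A_pos u; have [-> | /A_pos/ltW //] := eqVneq u 0.
by rewrite mulmx0 mxE.
Qed.

Lemma posdef_eigenvalue_gt0 n (A : 'M[R]_n) r : posdef A -> eigenvalue A r -> 0 < r.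
Proof.
move=> [_ A_pos] /eigenvalueP [v vA v_neq0].
have := A_pos v^T; rewrite trmx_eq0 trmxK vA -scalemxAl mxE => /(_ v_neq0).
have vv_gt0 : 0 < (v *m v^T) 0 0.
  by rewrite -[v in v *m _]trmxK dotmx_self_gt0 ?trmx_eq0.
by rewrite pmulr_lgt0.
Qed.

Lemma posdef_quartic_invroot n (A : 'M[R]_n.+1) : posdef A ->
  exists p : {poly R}, horner_mx A p ^+ 4 * A = 1.
Proof.
move=> A_pd; have [s [s_uniq s_eig annih]] := symmx_split_annihilator A_pd.1.
have [p p_s] := poly_interpolation s (fun r => (Num.sqrt (Num.sqrt r))^-1).
(* p ^+ 4 * 'X - 1 vanishes on the simple spectrum s, so the annihilator divides it. *)
exists p; pose q := p ^+ 4 * 'X - 1.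
have q_roots : all (root q) s.
  apply/allP => r r_s; rewrite /root /q !hornerE (p_s r r_s).
  have r_gt0 : 0 < r by apply: posdef_eigenvalue_gt0 A_pd (allP s_eig r r_s).
  have y4 : Num.sqrt (Num.sqrt r) ^+ 4 = r.
    by rewrite (_ : 4 = 2 * 2)%N // exprM !sqr_sqrtr ?sqrtr_ge0 ?ltW.
  by rewrite exprVn y4 mulVf ?subrr // gt_eqF.
have [q' q_eq] := uniq_roots_prod_XsubC q_roots (etrans (uniq_rootsE s) s_uniq).
have : horner_mx A q = 0 by rewrite q_eq rmorphM /= annih mulr0.
rewrite /q rmorphB rmorphM rmorphXn /= horner_mx_X rmorph1.
by move/eqP; rewrite subr_eq0 => /eqP.
Qed.

Lemma posdef_invsqrt_exists n (A : 'M[R]_n) : posdef A ->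
  exists S, posdef S /\ S *m S *m A = 1%:M.
Proof.
case: n A => [|n] A A_pd.
  exists 0; split; last by apply/matrixP => [[]].
  by split => [|v]; [apply/matrixP => [[]] | rewrite (_ : v = 0) ?eqxx //; apply/matrixP => [[]]].
have [p T4A] := posdef_quartic_invroot A_pd; set T := horner_mx A p in T4A.
have T_sym : T^T = T by rewrite /T trmx_horner_mx A_pd.1.
have T_inv : (T ^+ 3 * A) *m T = 1%:M.
  by apply: mulmx1C; rewrite mulmxE mulrA -exprS.
have T_inj v : T *m v = 0 -> v = 0.
  by move=> Tv0; rewrite -[v]mul1mx -T_inv -mulmxA Tv0 mulmx0.
exists (T *m T); split; last first.
  by apply: (etrans _ T4A); rewrite !mulmxE !exprS expr0 mulr1 !mulrA.
split => [|v v_neq0]; first by rewrite /Defs.symmetric trmx_mul T_sym.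
rewrite (_ : v^T *m (T *m T) *m v = (T *m v)^T *m (T *m v)).
  by apply: dotmx_self_gt0; apply: contra_neq v_neq0; apply: T_inj.
by rewrite trmx_mul T_sym !mulmxA.
Qed.

Lemma invsqrtmxP n (A : 'M[R]_n) : posdef A ->
  let S := invsqrtmx A in
  [/\ S^T = S, psdmx S, S *m S *m A = 1%:M, A *m (S *m S) = 1%:M & S *m A *m S = 1%:M].
Proof.
move=> A_pd S; have [S_pd SSA] := xgetPex 0 (posdef_invsqrt_exists A_pd).
split; [exact: S_pd.1 | exact: posdef_psd | exact: SSA | exact: mulmx1C |].
by apply: mulmx1C; rewrite mulmxA.
Qed.

End InverseSquareRoot.

Section InverseSquareRootPerturbation.
Variables (R : realFieldType) (n : nat) (S A : 'M[R]_n).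
Hypotheses (S_psd : psdmx S) (SSA : S *m S *m A = 1%:M) (ASS : A *m (S *m S) = 1%:M).
Hypothesis (A_sub1_psd : psdmx (A - 1%:M)).

Lemma invsqrt_contraction : mxbound (S *m S) 1.
Proof.
apply: mxbound_contraction => v; set u := S *m S *m v.
have -> : v = u + (A - 1%:M) *m u.
  by rewrite mulmxBl mul1mx addrC subrK /u !mulmxA -(mulmxA A) ASS mul1mx.
rewrite dotmx_selfD -addrA lerDl addr_ge0 ?dotmx_self_ge0 //.
by rewrite mulr_ge0 // mulmxA.
Qed.

Lemma invsqrt_sub1_sqfrob : sqfrob (S - 1%:M) <= sqfrob (S *m S *m (A - 1%:M)).
Proof.
have -> : S *m S *m (A - 1%:M) = - ((S - 1%:M) *m S + (S - 1%:M)).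
  by rewrite mulmxBr SSA mulmx1 mulmxBl mul1mx addrA subrK opprB.
by rewrite sqfrobN sqfrob_le_mulr_psd.
Qed.

Lemma invsqrt_sub1_expansion :
  (S - 1%:M) + (S - 1%:M) + (A - 1%:M) =
  - ((S - 1%:M) *m (S - 1%:M)) + S *m S *m (A - 1%:M) *m (A - 1%:M).
Proof.
set D := A - 1%:M.
have SSD1 : S *m S + S *m S *m D = 1%:M by rewrite mulmxBr SSA mulmx1 addrC subrK.
have D_eq : D = S *m S *m D + S *m S *m D *m D.
  by rewrite -mulmxDl SSD1 mul1mx.
clearbody D; rewrite {1}D_eq mulmxBl !mulmxBr !mul1mx mulmx1 -SSD1.
move: (S *m S *m D *m D) (S *m S *m D) (S *m S) => T Q P.
by apply/matrixP => i j; rewrite !mxE; ring.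
Qed.

End InverseSquareRootPerturbation.

Lemma frob_mxbound (R : realType) m n (A : 'M[R]_(m, n)) a :
  0 <= a -> mxbound A a -> frob A <= Num.sqrt (m * n)%:R * a.
Proof.
move=> a0 Aa; rewrite -[a in X in _ <= X]ger0_norm // -sqrtr_sqr -sqrtrM ?ler0n //.
by rewrite ler_sqrt ?mulr_ge0 ?ler0n ?sqr_ge0 // sqfrob_mxbound.
Qed.

Section RetractionExpansion.
Variables (R : realType) (d k : nat) (w C : R).
Hypothesis w_ge0 : 0 <= w.

Let gram_const := d%:R * w * (2 + C * w).
Let invsqrt1_const := k%:R * (k%:R * gram_const).
Let invsqrt2_const :=
  k%:R * invsqrt1_const ^+ 2 + k%:R * (k%:R * gram_const ^+ 2) + d%:R * w ^+ 2.
Let retr_const := k%:R * ((1 + C * w) * invsqrt2_const) + k%:R * (w * (d%:R * w)).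

Variables (X W : 'M[R]_(d, k)) (g : R).
Hypotheses (XtX : X^T *m X = 1%:M) (W_bound : mxbound W w).
Hypotheses (B_sym : (X^T *m W)^T = X^T *m W) (B_psd : psdmx (X^T *m W)).
Hypotheses (g_ge0 : 0 <= g) (g_leC : g <= C).

Let M := X + g *: W.
Let B := X^T *m W.
Let N := W^T *m W.

Lemma gram_sub1E : M^T *m M - 1%:M = g *: (B + B) + g ^+ 2 *: N.
Proof.
have WtX : W^T *m X = B by rewrite -[LHS]trmxK trmx_mul trmxK B_sym.
rewrite /M [(_ + _)^T]linearD /= [(_ *: _)^T]linearZ /= mulmxDl !mulmxDr XtX.
rewrite -!scalemxAr -!scalemxAl WtX.
by rewrite scalerA -expr2 scalerDr -/B -/N addrC !addrA addNr add0r.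
Qed.

Lemma gram_sub1_psd : psdmx (M^T *m M - 1%:M).
Proof.
rewrite gram_sub1E; apply: psdmxD; apply: psdmxZ; rewrite ?sqr_ge0 //.
  exact: psdmxD.
exact: psd_mulTmx.
Qed.

Lemma gram_posdef : posdef (M^T *m M).
Proof.
split=> [|v v_neq0]; first by rewrite /Defs.symmetric trmx_mul trmxK.
have := gram_sub1_psd v; rewrite mulmxBr mulmxBl mulmx1.
move: (v^T *m v) (dotmx_self_gt0 v_neq0) (v^T *m _ *m v) => a a_gt0 b.
by rewrite !mxE subr_ge0; apply: lt_le_trans.
Qed.

Let S := invsqrtmx (M^T *m M).

Lemma retr_orthonormal : (retr X (g *: W))^T *m retr X (g *: W) = 1%:M.
Proof.
have [S_sym _ _ _ SAS] := invsqrtmxP gram_posdef.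
by rewrite trmx_mul -/M S_sym mulmxA -(mulmxA _ M^T) SAS.
Qed.

Let g_sqr_le : g ^+ 2 <= C * g. Proof. by rewrite expr2 ler_wpM2r. Qed.
Let C_ge0 : 0 <= C. Proof. exact: le_trans g_leC. Qed.
Let gram_const_ge0 : 0 <= gram_const. Proof. by rewrite /gram_const; nonneg. Qed.
Let X_bound : mxbound X 1. Proof. exact: mxbound_orthonormal. Qed.
Let B_bound : mxbound B (d%:R * (1 * w)). Proof. exact: mxboundM (mxboundT _) _. Qed.
Let N_bound : mxbound N (d%:R * (w * w)). Proof. exact: mxboundM (mxboundT _) _. Qed.

Lemma gram_sub1_bound : mxbound (M^T *m M - 1%:M) (g * gram_const).
Proof.
rewrite gram_sub1E; apply: mxbound_le (mxboundD (mxboundZ g (mxboundD B_bound B_bound))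
  (mxboundZ (g ^+ 2) N_bound)).
have : 0 <= (C * g - g ^+ 2) * (d%:R * w ^+ 2).
  by apply: mulr_ge0; rewrite ?subr_ge0 ?g_sqr_le ?mulr_ge0 ?sqr_ge0.
by rewrite !ger0_norm ?sqr_ge0 // /gram_const; nra.
Qed.

Let SSD_bound : mxbound (S *m S *m (M^T *m M - 1%:M)) (k%:R * (1 * (g * gram_const))).
Proof.
have [_ _ _ ASS _] := invsqrtmxP gram_posdef.
exact: mxboundM (invsqrt_contraction ASS gram_sub1_psd) gram_sub1_bound.
Qed.

Lemma invsqrt_sub1_bound : mxbound (S - 1%:M) (g * invsqrt1_const).
Proof.
have [_ S_psd SSA _ _] := invsqrtmxP gram_posdef.
apply: mxbound_sqfrob; first by rewrite /invsqrt1_const; nonneg.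
apply: le_trans (invsqrt_sub1_sqfrob S_psd SSA) _.
by apply: le_trans (sqfrob_mxbound SSD_bound) _; rewrite natrM /invsqrt1_const; nra.
Qed.

Lemma invsqrt_second_order_bound : mxbound (S - 1%:M + g *: B) (g ^+ 2 * invsqrt2_const).
Proof.
have [_ _ SSA _ _] := invsqrtmxP gram_posdef.
apply: mxbound_double.
have -> : S - 1%:M + g *: B + (S - 1%:M + g *: B) = - ((S - 1%:M) *m (S - 1%:M)) +
    S *m S *m (M^T *m M - 1%:M) *m (M^T *m M - 1%:M) - g ^+ 2 *: N.
  rewrite -(invsqrt_sub1_expansion SSA) gram_sub1E scalerDr.
  move: (S - 1%:M) (g *: B) (g ^+ 2 *: N) => E P Q.
  by apply/matrixP => i j; rewrite !mxE; ring.
have E_bound := invsqrt_sub1_bound.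
apply: mxbound_le (mxboundB (mxboundD (mxboundN (mxboundM E_bound E_bound))
  (mxboundM SSD_bound gram_sub1_bound)) (mxboundZ (g ^+ 2) N_bound)).
by rewrite ger0_norm ?sqr_ge0 // /invsqrt2_const; nra.
Qed.

Lemma retr_expansion_bound :
  frob (retr X (g *: W) - X - g *: (W - X *m B)) <=
  Num.sqrt (d * k)%:R * retr_const * g ^+ 2.
Proof.
have -> : retr X (g *: W) - X - g *: (W - X *m B) =
    M *m (S - 1%:M + g *: B) - g ^+ 2 *: (W *m B).
  have MB : M *m B = X *m B + g *: (W *m B) by rewrite mulmxDl -scalemxAl.
  rewrite /retr -/M -/S mulmxDr mulmxBr mulmx1 -scalemxAr MB.
  move: (M *m S) (X *m B) (W *m B) => T P Q; rewrite /M.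
  by apply/matrixP => i j; rewrite !mxE; ring.
have M_bound : mxbound M (1 + C * w).
  apply: mxbound_le (mxboundD X_bound (mxboundZ g W_bound)).
  by rewrite ger0_norm // lerD2l (ler_wpM2r w_ge0 g_leC).
rewrite -mulrA; apply: frob_mxbound.
  by rewrite /retr_const /invsqrt2_const /invsqrt1_const; nonneg.
apply: mxbound_le (mxboundB (mxboundM M_bound invsqrt_second_order_bound)
  (mxboundZ (g ^+ 2) (mxboundM W_bound B_bound))).
by rewrite ger0_norm ?sqr_ge0 // /retr_const; nra.
Qed.

End RetractionExpansion.

Lemma opnorm_le1_mxbound (R : realType) n (H : 'M[R]_n) : opnorm_le1 H -> mxbound H 1.
Proof. by move=> H_le1; apply: mxbound_contraction => v; rewrite !dotmx_selfE; apply: H_le1. Qed.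

Section OjaSteps.
Variables (R : realType) (d k : nat).

Definition oja_step_bound (C K : R)
    (step : R -> 'M[R]_(d, k) -> 'M[R]_d -> 'M[R]_(d, k)) :=
  forall g X H, 0 <= g <= C -> X^T *m X = 1%:M -> posdef H -> opnorm_le1 H ->
  (step g X H)^T *m step g X H = 1%:M /\
  frob (step g X H - X - g *: ojadir X H) <= K * g ^+ 2.

Lemma ojadir_orthogonal (X : 'M[R]_(d, k)) H : X^T *m X = 1%:M -> X^T *m ojadir X H = 0.
Proof. by move=> XtX; rewrite /ojadir !mulmxA mulmxBr mulmx1 mulmxA XtX mul1mx subrr !mul0mx. Qed.

Lemma ojadirE (X : 'M[R]_(d, k)) H : ojadir X H = H *m X - X *m (X^T *m (H *m X)).
Proof. by rewrite /ojadir !mulmxBl !mul1mx -!mulmxA. Qed.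

Lemma rgd_step_bound C : exists K, oja_step_bound C K (fun g X H => retr X (g *: ojadir X H)).
Proof.
have w_ge0 : 0 <= d%:R ^+ 2 * (1 + k%:R) :> R by nonneg.
eexists => g X H /andP [g_ge0 g_leC] XtX H_pd H_le1.
have X_bound := mxbound_orthonormal XtX.
have G_bound : mxbound (ojadir X H) (d%:R ^+ 2 * (1 + k%:R)).
  apply: mxbound_le (mxboundM (mxboundM (mxboundB (@mxbound1 _ d)
    (mxboundM X_bound (mxboundT X_bound))) (opnorm_le1_mxbound H_le1)) X_bound).
  by rewrite !mulr1 mulrA -expr2.
have XtG := ojadir_orthogonal H XtX.
have B_psd : psdmx (X^T *m ojadir X H) by rewrite XtG => u; rewrite mulmx0 mul0mx mxE.
have B_sym : (X^T *m ojadir X H)^T = X^T *m ojadir X H by rewrite XtG trmx0.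
split; first exact: retr_orthonormal.
have := retr_expansion_bound w_ge0 XtX G_bound B_sym B_psd g_ge0 g_leC.
by rewrite XtG mulmx0 subr0; apply.
Qed.

Lemma power_step_bound C : exists K, oja_step_bound C K (fun g X H => retr X (g *: (H *m X))).
Proof.
eexists => g X H /andP [g_ge0 g_leC] XtX H_pd H_le1.
have HX_bound : mxbound (H *m X) d%:R.
  apply: mxbound_le (mxboundM (opnorm_le1_mxbound H_le1) (mxbound_orthonormal XtX)).
  by rewrite !mulr1.
have B_sym : (X^T *m (H *m X))^T = X^T *m (H *m X).
  by rewrite !trmx_mul trmxK H_pd.1 mulmxA.
have B_psd : psdmx (X^T *m (H *m X)).
  by move=> u; rewrite !mulmxA -mulmxA -trmx_mul (posdef_psd H_pd).
split; first exact: retr_orthonormal.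
have := retr_expansion_bound (ler0n _ d) XtX HX_bound B_sym B_psd g_ge0 g_leC.
by rewrite -ojadirE; apply.
Qed.

Lemma oja_step_bound_iterates C K step (gamma : nat -> R)
    (H : nat -> 'M[R]_d) (X : nat -> 'M[R]_(d, k)) :
  oja_step_bound C K step -> (forall n, (0 < n)%N -> 0 <= gamma n <= C) ->
  (forall n, (0 < n)%N -> posdef (H n) /\ opnorm_le1 (H n)) ->
  (X 0%N)^T *m X 0%N = 1%:M ->
  (forall n, (0 < n)%N -> X n = step (gamma n) (X n.-1) (H n)) ->
  forall n, (0 < n)%N ->
  frob (X n - X n.-1 - gamma n *: ojadir (X n.-1) (H n)) <= K * gamma n ^+ 2.
Proof.
move=> stepK gammaC H_ok X0_orth X_rec.
have X_step n : (0 < n)%N -> (X n.-1)^T *m X n.-1 = 1%:M ->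
    (X n)^T *m X n = 1%:M /\
    frob (X n - X n.-1 - gamma n *: ojadir (X n.-1) (H n)) <= K * gamma n ^+ 2.
  move=> n_gt0 X_orth; have [H_pd H_le1] := H_ok n n_gt0.
  by rewrite (X_rec n n_gt0); apply: stepK; rewrite ?gammaC.
have X_orth n : (X n)^T *m X n = 1%:M.
  by elim: n => [// | n IHn]; have [] := X_step n.+1 isT IHn.
by move=> n n_gt0; have [] := X_step n n_gt0 (X_orth _).
Qed.

End OjaSteps.

Local Open Scope classical_set_scope.

Theorem lemma10 (R : realType) (dm : measure_display) (Omega : measurableType dm)
  (P : probability Omega R) (d k : nat)
  (H : nat -> Omega -> 'M[R]_d) (C alpha : R)
  (X0 : 'M[R]_(d, k)) (X : nat -> Omega -> 'M[R]_(d, k)) :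
  0 < C -> 1 / 2 < alpha -> alpha < 1 ->
  X0^T *m X0 = 1%:M ->
  {ae P, forall w, forall n : nat, (0 < n)%N ->
     posdef (H n w) /\ opnorm_le1 (H n w)} ->
  let gamma := fun n : nat => C * (n%:R `^ (- alpha)) in
  (forall w, X 0%N w = X0) ->
  ((forall w (n : nat), (0 < n)%N ->
      X n w = retr (X n.-1 w) (gamma n *: ojadir (X n.-1 w) (H n w)))
   \/
   (forall w (n : nat), (0 < n)%N ->
      X n w = retr (X n.-1 w) (gamma n *: (H n w *m X n.-1 w)))) ->
  exists c : R, 0 < c /\
    {ae P, forall w, forall n : nat, (0 < n)%N ->
       frob (X n w - X n.-1 w - gamma n *: ojadir (X n.-1 w) (H n w))
         <= c * gamma n ^+ 2}.
Proof.
move=> C_gt0 alpha_gt _ X0_orth H_ok gamma X_0 X_rec.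
have gammaC n : (0 < n)%N -> 0 <= gamma n <= C.
  move=> n_gt0; rewrite /gamma mulr_ge0 ?powR_ge0 ?(ltW C_gt0) //= ler_piMr ?(ltW C_gt0) //.
  rewrite -[X in _ <= X](powRr0 n%:R); apply: ler_powR; first by rewrite ler1n.
  by rewrite oppr_le0; lra.
have [step [K [stepK X_step]]] : exists step K, oja_step_bound C K step /\
    forall w n, (0 < n)%N -> X n w = step (gamma n) (X n.-1 w) (H n w).
  case: X_rec => X_rec.
    have [K stepK] := rgd_step_bound d k C.
    by exists (fun g Y Hn => retr Y (g *: ojadir Y Hn)), K.
  have [K stepK] := power_step_bound d k C.
  by exists (fun g Y Hn => retr Y (g *: (Hn *m Y))), K.
exists (Num.max K 1); split; first by rewrite lt_max ltr01 orbT.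
apply: filterS H_ok => w H_ok_w n n_gt0.
have X0w : (X 0%N w)^T *m X 0%N w = 1%:M by rewrite X_0.
apply: le_trans (oja_step_bound_iterates stepK gammaC H_ok_w X0w (X_step w) n_gt0) _.
by rewrite ler_wpM2r ?sqr_ge0 ?le_max ?lexx.
Qed.
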